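(* Let $E, F$ be Banach lattices with $F$ having the property (d), and let $S, T: E \to F$ be operators with $0 \le S \le T$. If $T$ is almost Grothendieck, then $S$ is almost Grothendieck.
   Context: $F$ has the property (d) if $|y_n'| \to 0$ weak* in $F'$ for every disjoint weak* null sequence $(y_n')$ in $F'$. A bounded operator $T: E \to F$ is almost Grothendieck if $T'y_n' \to 0$ weakly in $E'$ for every disjoint weak* null sequence $(y_n') \subset F'$. *)

From HB Require Import structures.
From mathcomp Require Import all_boot all_order all_algebra.
From mathcomp Require Import all_classical all_reals all_analysis.
Set Implicit Arguments. Unset Strict Implicit. Unset Printing Implicit Defensive.
Import Order.TTheory GRing.Theory Num.Theory.
Import numFieldNormedType.Exports.
Local Open Scope classical_set_scope.
Local Open Scope ring_scope.

Record banach_lattice_on (R : realType) (E : completeNormedModType R) := {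
  bl_le : E -> E -> Prop;
  bl_join : E -> E -> E;
  bl_refl : forall x, bl_le x x;
  bl_antisym : forall x y, bl_le x y -> bl_le y x -> x = y;
  bl_trans : forall x y z, bl_le x y -> bl_le y z -> bl_le x z;
  bl_add : forall x y z, bl_le x y -> bl_le (x + z) (y + z);
  bl_scale : forall (a : R) x y, 0 <= a -> bl_le x y -> bl_le (a *: x) (a *: y);
  bl_join_ubl : forall x y, bl_le x (bl_join x y);
  bl_join_ubr : forall x y, bl_le y (bl_join x y);
  bl_join_lub : forall x y z, bl_le x z -> bl_le y z -> bl_le (bl_join x y) z;
  bl_norm : forall x y, bl_le (bl_join x (- x)) (bl_join y (- y)) -> `|x| <= `|y|
}.

Section Defs.
Variable R : realType.

Definition labs (E : completeNormedModType R) (L : banach_lattice_on E) (x : E) : E :=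
  bl_join L x (- x).
Definition lpos (E : completeNormedModType R) (L : banach_lattice_on E) (x : E) : E :=
  bl_join L x 0.
Definition lneg (E : completeNormedModType R) (L : banach_lattice_on E) (x : E) : E :=
  bl_join L (- x) 0.

Definition is_linear (U V : lmodType R) (f : U -> V) : Prop :=
  forall (a : R) x y, f (a *: x + y) = a *: f x + f y.

Definition bounded_linear (U V : normedModType R) (f : U -> V) : Prop :=
  is_linear f /\ exists C : R, forall x, `|f x| <= C * `|x|.

Definition in_dual (E : normedModType R) (f : E -> R) : Prop :=
  bounded_linear (f : E -> R^o).

Definition dual_norm (E : normedModType R) (f : E -> R) : R :=
  sup [set `|f x| | x in [set x : E | `|x| <= 1]].

Definition in_bidual (E : normedModType R) (phi : (E -> R) -> R) : Prop :=
  (forall (a : R) f g, in_dual f -> in_dual g ->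
      phi (fun x => a * f x + g x) = a * phi f + phi g) /\
  exists C : R, forall f, in_dual f -> `|phi f| <= C * dual_norm f.

Definition weak_star_null (E : normedModType R) (f : nat -> E -> R) : Prop :=
  forall x, (fun n => f n x) @ \oo --> (0 : R).

Definition weakly_null (E : normedModType R) (f : nat -> E -> R) : Prop :=
  forall phi, in_bidual phi -> (fun n => phi (f n)) @ \oo --> (0 : R).

(** modulus |f| of f in the dual lattice E' (Riesz–Kantorovich formula):
    |f|(x) = sup { f z : |z| <= x } for x >= 0, extended by linearity. *)
Definition dabs_pos (E : completeNormedModType R) (L : banach_lattice_on E)
  (f : E -> R) (x : E) : R :=
  sup [set f z | z in [set z | bl_le L (labs L z) x]].

Definition dabs (E : completeNormedModType R) (L : banach_lattice_on E)
  (f : E -> R) (x : E) : R :=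
  dabs_pos L f (lpos L x) - dabs_pos L f (lneg L x).

(** disjointness in E' : |f| /\ |g| = 0, where the infimum in E' is given by
    (h /\ k)(x) = inf { h u + k (x - u) : 0 <= u <= x } for x >= 0. *)
Definition dual_disjoint (E : completeNormedModType R) (L : banach_lattice_on E)
  (f g : E -> R) : Prop :=
  forall x, bl_le L 0 x ->
    inf [set dabs L f u + dabs L g (x - u) | u in [set u | bl_le L 0 u /\ bl_le L u x]] = 0.

Definition dual_disjoint_seq (E : completeNormedModType R) (L : banach_lattice_on E)
  (f : nat -> E -> R) : Prop :=
  (forall n, in_dual (f n)) /\ (forall n m, n <> m -> dual_disjoint L (f n) (f m)).

Definition property_d (F : completeNormedModType R) (L : banach_lattice_on F) : Prop :=
  forall f : nat -> F -> R, dual_disjoint_seq L f -> weak_star_null f ->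
    weak_star_null (fun n => dabs L (f n)).

(** almost Grothendieck operators: T' y_n' = y_n' o T -> 0 weakly in E' *)
Definition almost_grothendieck (E F : completeNormedModType R)
  (LF : banach_lattice_on F) (T : E -> F) : Prop :=
  forall f : nat -> F -> R, dual_disjoint_seq LF f -> weak_star_null f ->
    weakly_null (fun n => fun x => f n (T x)).

Definition positive_op (E F : completeNormedModType R)
  (LE : banach_lattice_on E) (LF : banach_lattice_on F) (T : E -> F) : Prop :=
  forall x, bl_le LE 0 x -> bl_le LF 0 (T x).

End Defs.

(* Write y_n = y_n^+ - y_n^-. For x >= 0 we have
   0 <= y_n^+/-(S x) <= |y_n|(S x) <= |y_n|(T x), and by property (d) the
   disjoint sequence (|y_n|) is weak* null, so T'|y_n| -> 0 weakly. A sequence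
   of functionals squeezed between 0 and a weakly null sequence is weakly null,
   because every element of the bidual is a difference of positive ones. Both
   positive parts, in E' and in E'', come from the Riesz-Kantorovich
   construction: x |-> sup f([0, x]) is additive on the positive cone by the
   Riesz decomposition property, hence extends to a linear functional. *)

From mathcomp Require Import all_boot all_order all_algebra.
From mathcomp Require Import all_classical all_reals all_analysis.
From mathcomp Require Import ring lra.
Import Order.TTheory GRing.Theory Num.Theory.
Import numFieldNormedType.Exports.
Local Open Scope ring_scope.
Local Open Scope classical_set_scope.
Set Implicit Arguments. Unset Strict Implicit. Unset Printing Implicit Defensive.

(* The setting of the Riesz-Kantorovich theorem: a subspace [D] of [V] ordered
   by a cone [P] with the Riesz decomposition property, a splitting of every
   [v] in [D] as [pos v - neg v], and a functional [f], linear on [D] and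
   bounded above on order intervals. Instances: [V = E] with [D] everything,
   and [V = E'] with [D] the bounded functionals. *)
Record riesz_data (R : realType) (V : lmodType R) (D P : V -> Prop)
    (pos neg : V -> V) (f : V -> R) : Prop := {
  rd_dom0 : D 0;
  rd_dom_comb : forall a x y, D x -> D y -> D (a *: x + y);
  rd_cone_dom : forall x, P x -> D x;
  rd_cone0 : P 0;
  rd_coneD : forall x y, P x -> P y -> P (x + y);
  rd_coneZ : forall a x, 0 <= a -> P x -> P (a *: x);
  rd_pos_cone : forall v, D v -> P (pos v);
  rd_neg_cone : forall v, D v -> P (neg v);
  rd_pos_neg : forall v, D v -> v = pos v - neg v;
  rd_decomposition : forall u x y, P u -> P x -> P y -> P (x + y - u) ->
    exists u1, [/\ P u1, P (x - u1), P (u - u1) & P (y - (u - u1))];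
  rd_linear : forall a x y, D x -> D y -> f (a *: x + y) = a * f x + f y;
  rd_order_bounded : forall x, P x ->
    exists B, forall z, P z -> P (x - z) -> f z <= B }.

Section RieszKantorovich.
Variables (R : realType) (V : lmodType R) (D P : V -> Prop) (pos neg : V -> V)
  (f : V -> R).
Hypothesis rd : riesz_data D P pos neg f.

Let dom0 := rd_dom0 rd.
Let cone_dom := rd_cone_dom rd.
Let cone0 := rd_cone0 rd.
Let coneD := rd_coneD rd.
Let pos_cone := rd_pos_cone rd.
Let neg_cone := rd_neg_cone rd.
Let pos_neg := rd_pos_neg rd.

Lemma rd_domD x y : D x -> D y -> D (x + y).
Proof. by move=> Dx Dy; have := rd_dom_comb rd 1 Dx Dy; rewrite scale1r. Qed.

Lemma rd_domZ a x : D x -> D (a *: x).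
Proof. by move=> Dx; have := rd_dom_comb rd a Dx dom0; rewrite addr0. Qed.

Local Hint Resolve rd_domD rd_domZ cone_dom coneD pos_cone neg_cone dom0 cone0 : core.

Lemma rd_linearD x y : D x -> D y -> f (x + y) = f x + f y.
Proof. by move=> Dx Dy; have := rd_linear rd 1 Dx Dy; rewrite scale1r mul1r. Qed.

Lemma rd_linear0 : f 0 = 0.
Proof. by apply: (@addrI _ (f 0)); rewrite -rd_linearD // !addr0. Qed.

Lemma rd_linearZ a x : D x -> f (a *: x) = a * f x.
Proof. by move=> Dx; have := rd_linear rd a Dx dom0; rewrite !addr0 rd_linear0 addr0. Qed.

Definition rk_sup (x : V) : R := sup [set f z | z in [set z | P z /\ P (x - z)]].

Lemma rk_sup_ub x z : P x -> P z -> P (x - z) -> f z <= rk_sup x.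
Proof.
move=> /(rd_order_bounded rd) [B HB] Pz Pxz; apply: ub_le_sup; last by exists z.
by exists B => _ [w [Pw Pxw] <-]; apply: HB.
Qed.

Lemma rk_sup_le x B : P x -> (forall z, P z -> P (x - z) -> f z <= B) ->
  rk_sup x <= B.
Proof.
move=> Px HB; apply: ge_sup => [|_ [z [Pz Pxz] <-]]; last exact: HB.
by exists (f 0), 0; first by split; rewrite ?subr0.
Qed.

Lemma rk_sup_ge0 x : P x -> 0 <= rk_sup x.
Proof. by move=> Px; rewrite -rd_linear0; apply: rk_sup_ub => //; rewrite subr0. Qed.

Lemma le_rk_sup x : P x -> f x <= rk_sup x.
Proof. by move=> Px; apply: rk_sup_ub => //; rewrite subrr. Qed.

(* [<=] is the Riesz decomposition property, [>=] is additivity of [f]. *)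
Lemma rk_supD x y : P x -> P y -> rk_sup (x + y) = rk_sup x + rk_sup y.
Proof.
move=> Px Py; apply/eqP; rewrite eq_le; apply/andP; split.
  apply: rk_sup_le => [|z Pz Pxyz]; first exact: coneD.
  have [u1 [Pu1 Pxu1 Pzu1 Pyzu1]] := rd_decomposition rd Pz Px Py Pxyz.
  rewrite -(subrKC u1 z) rd_linearD; auto.
  by apply: lerD; apply: rk_sup_ub.
rewrite -lerBrDr; apply: rk_sup_le => // z1 Pz1 Pxz1.
rewrite lerBrDr addrC -lerBrDr; apply: rk_sup_le => // z2 Pz2 Pyz2.
rewrite lerBrDr addrC -rd_linearD; auto; apply: rk_sup_ub; auto.
by rewrite opprD addrACA; apply: coneD.
Qed.

Lemma rk_sup0 : rk_sup 0 = 0.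
Proof. by apply: (@addrI _ (rk_sup 0)); rewrite -rk_supD // !addr0. Qed.

Lemma rk_supZ a x : 0 <= a -> P x -> rk_sup (a *: x) = a * rk_sup x.
Proof.
move=> a0 Px; have [->|an0] := eqVneq a 0; first by rewrite scale0r rk_sup0 mul0r.
have apos : 0 < a by rewrite lt_def an0.
have ai0 : 0 <= a^-1 by rewrite invr_ge0.
have coneZ := rd_coneZ rd.
apply/eqP; rewrite eq_le; apply/andP; split.
  apply: rk_sup_le => [|z Pz Pxz]; first exact: coneZ.
  rewrite -[z](scalerKV an0) rd_linearZ; last by apply/cone_dom/coneZ.
  rewrite ler_pM2l //; apply: rk_sup_ub; [done|exact: coneZ|].
  by rewrite -[x](scalerK an0) -scalerBr; apply: coneZ.
rewrite -ler_pdivlMl //; apply: rk_sup_le => // z Pz Pxz.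
rewrite ler_pdivlMl // -rd_linearZ; auto; apply: rk_sup_ub; [exact: coneZ|exact: coneZ|].
by rewrite -scalerBr; apply: coneZ.
Qed.

Lemma rk_sup_sub a b c d : P a -> P b -> P c -> P d -> a - b = c - d ->
  rk_sup a - rk_sup b = rk_sup c - rk_sup d.
Proof.
move=> Pa Pb Pc Pd e.
have /(congr1 rk_sup) : a + d = c + b by rewrite -[a](subrK b) e addrAC subrK.
rewrite !rk_supD // => h.
by apply/eqP; rewrite subr_eq addrAC -h addrK.
Qed.

Definition rk_pos (v : V) : R := rk_sup (pos v) - rk_sup (neg v).

Lemma rk_pos_cone x : P x -> rk_pos x = rk_sup x.
Proof.
move=> Px; rewrite /rk_pos (@rk_sup_sub _ _ x 0) ?rk_sup0 ?subr0; auto.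
by rewrite -pos_neg ?subr0; auto.
Qed.

Lemma rk_posD x y : D x -> D y -> rk_pos (x + y) = rk_pos x + rk_pos y.
Proof.
move=> Dx Dy; rewrite /rk_pos (@rk_sup_sub _ _ (pos x + pos y) (neg x + neg y)); auto.
  by rewrite !rk_supD; auto; rewrite opprD addrACA.
by rewrite -pos_neg; auto; rewrite opprD addrACA -!pos_neg.
Qed.

Lemma rk_posZ a x : D x -> rk_pos (a *: x) = a * rk_pos x.
Proof.
move=> Dx; have coneZ := rd_coneZ rd; have [a0|a0] := leP 0 a.
  rewrite /rk_pos (@rk_sup_sub _ _ (a *: pos x) (a *: neg x)); auto.
    by rewrite !rk_supZ; auto; rewrite mulrBr.
  by rewrite -pos_neg; auto; rewrite -scalerBr -pos_neg.
have a0' : 0 <= - a by rewrite oppr_ge0 ltW.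
rewrite /rk_pos (@rk_sup_sub _ _ ((- a) *: neg x) ((- a) *: pos x)); auto.
  by rewrite !rk_supZ; auto; rewrite -mulrBr mulNr -mulrN opprB.
rewrite -pos_neg; auto.
by rewrite -scalerBr -opprB scalerN scaleNr opprK -pos_neg.
Qed.

Lemma rk_pos_linear a x y : D x -> D y ->
  rk_pos (a *: x + y) = a * rk_pos x + rk_pos y.
Proof. by move=> Dx Dy; rewrite rk_posD ?rk_posZ; auto. Qed.

Lemma rk_pos_norm_le (N : V -> R) C K : 0 <= C ->
  (forall x z, P x -> P z -> P (x - z) -> N z <= N x) ->
  (forall z, P z -> f z <= C * N z) ->
  (forall v, D v -> N (pos v) <= K * N v /\ N (neg v) <= K * N v) ->
  forall v, D v -> `|rk_pos v| <= C * (K * N v).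
Proof.
move=> C0 Nmono fN NK v Dv.
have bound x : P x -> N x <= K * N v -> 0 <= rk_sup x <= C * (K * N v).
  move=> Px NxK; rewrite rk_sup_ge0 //=; apply: rk_sup_le => // z Pz Pxz.
  apply: le_trans (fN z Pz) _; apply: ler_wpM2l => //.
  exact: le_trans (Nmono x z Px Pz Pxz) NxK.
have [Npos Nneg] := NK v Dv.
have /andP[b1 b2] := bound _ (pos_cone Dv) Npos.
have /andP[b3 b4] := bound _ (neg_cone Dv) Nneg.
by rewrite ler_norml /rk_pos; apply/andP; split; lra.
Qed.

End RieszKantorovich.

Section BanachLatticeFacts.
Variables (R : realType) (E : completeNormedModType R) (L : banach_lattice_on E).
Local Notation le := (bl_le L).
Local Notation jn := (bl_join L).

Lemma bl_subr_ge0 x y : le x y <-> le 0 (y - x).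
Proof.
split=> H; first by have := bl_add (- x) H; rewrite subrr.
by have := bl_add x H; rewrite add0r subrK.
Qed.

Lemma bl_leN x y : le x y -> le (- y) (- x).
Proof. by move=> /bl_subr_ge0 H; apply/bl_subr_ge0; rewrite opprK addrC. Qed.

Lemma bl_oppr_le0 x : le 0 x -> le (- x) 0.
Proof. by move=> /bl_leN; rewrite oppr0. Qed.

Lemma bl_addr_ge0 x y : le 0 x -> le 0 y -> le 0 (x + y).
Proof. by move=> Hx Hy; apply: bl_trans Hy _; have := bl_add y Hx; rewrite add0r. Qed.

Lemma bl_scaler_ge0 (a : R) x : 0 <= a -> le 0 x -> le 0 (a *: x).
Proof. by move=> a0 Hx; have := bl_scale a0 Hx; rewrite scaler0. Qed.

Lemma bl_joinC x y : jn x y = jn y x.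
Proof.
by apply: bl_antisym; apply: bl_join_lub; first [exact: bl_join_ubl|exact: bl_join_ubr].
Qed.

Lemma bl_joinDl x y z : jn x y + z = jn (x + z) (y + z).
Proof.
apply: bl_antisym; last first.
  by apply: bl_join_lub; apply: bl_add; [apply: bl_join_ubl|apply: bl_join_ubr].
rewrite -[jn (x + z) _](subrK z); apply: bl_add.
by apply: bl_join_lub; rewrite -[X in le X](addrK z); apply: bl_add;
  [apply: bl_join_ubl|apply: bl_join_ubr].
Qed.

Lemma lpos_ge0 x : le 0 (lpos L x). Proof. exact: bl_join_ubr. Qed.
Lemma lneg_ge0 x : le 0 (lneg L x). Proof. exact: bl_join_ubr. Qed.

Lemma lpos_sub_lneg x : lpos L x - lneg L x = x.
Proof.
apply/eqP; rewrite subr_eq addrC /lneg /lpos bl_joinDl addNr add0r.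
by rewrite bl_joinC.
Qed.

Lemma labs_le z x : le (labs L z) x <-> le z x /\ le (- z) x.
Proof.
split=> [H|[]]; last exact: bl_join_lub.
by split; apply: bl_trans H; [apply: bl_join_ubl|apply: bl_join_ubr].
Qed.

(* [2 |z| = (|z| - z) + (|z| + z)] is a sum of positive vectors. *)
Lemma labs_ge0 z : le 0 (labs L z).
Proof.
have h1 : le 0 (labs L z - z) by apply/(bl_subr_ge0 z); apply: bl_join_ubl.
have h2 : le 0 (labs L z + z).
  by rewrite -[z in _ + z]opprK; apply/(bl_subr_ge0 (- z)); apply: bl_join_ubr.
have : le 0 ((2 : R)^-1 *: ((labs L z - z) + (labs L z + z))).
  by apply: bl_scaler_ge0; [rewrite invr_ge0 ler0n|exact: bl_addr_ge0].
by rewrite addrACA addNr addr0 -mulr2n -(scaler_nat 2 (labs L z)) scalerA mulVf ?scale1r.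
Qed.

Lemma bl_norm_mono z x : le 0 z -> le z x -> `|z| <= `|x|.
Proof.
move=> z0 zx; apply: bl_norm; apply: bl_join_lub.
  by apply: bl_trans zx _; apply: bl_join_ubl.
apply: bl_trans (bl_oppr_le0 z0) _; apply: bl_trans z0 _.
by apply: bl_trans zx _; apply: bl_join_ubl.
Qed.

Lemma norm_labs_le z x : le (labs L z) x -> `|z| <= `|x|.
Proof. by move=> H; apply: bl_norm; apply: bl_trans H _; apply: bl_join_ubl. Qed.

Lemma norm_labs x : `|labs L x| <= `|x|.
Proof.
apply: bl_norm; apply: bl_join_lub; first exact: bl_refl.
by apply: bl_trans (labs_ge0 x); apply: bl_oppr_le0; apply: labs_ge0.
Qed.

Lemma norm_lpos x : `|lpos L x| <= `|x|.
Proof.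
apply: bl_norm; apply: bl_join_lub.
  by apply: bl_join_lub; [apply: bl_join_ubl|apply: labs_ge0].
by apply: bl_trans (bl_oppr_le0 (lpos_ge0 x)) _; apply: labs_ge0.
Qed.

Lemma norm_lneg x : `|lneg L x| <= `|x|.
Proof.
apply: bl_norm; apply: bl_join_lub.
  by apply: bl_join_lub; [apply: bl_join_ubr|apply: labs_ge0].
by apply: bl_trans (bl_oppr_le0 (lneg_ge0 x)) _; apply: labs_ge0.
Qed.

(* The witness is the infimum [u1 = inf(u, x) = - sup(- u, - x)]. *)
Lemma bl_riesz_decomposition u x y : le 0 u -> le 0 x -> le 0 y ->
  le 0 (x + y - u) ->
  exists u1, [/\ le 0 u1, le 0 (x - u1), le 0 (u - u1) & le 0 (y - (u - u1))].
Proof.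
move=> u0 x0 y0 h; exists (- jn (- u) (- x)); rewrite !opprK.
have -> : x + jn (- u) (- x) = jn (x - u) 0 by rewrite addrC bl_joinDl addNr addrC.
have -> : u + jn (- u) (- x) = jn 0 (u - x) by rewrite addrC bl_joinDl addNr addrC.
split; [|exact: bl_join_ubr|exact: bl_join_ubl|].
  by rewrite -oppr0; apply: bl_leN; apply: bl_join_lub; apply: bl_oppr_le0.
apply/(bl_subr_ge0 (jn 0 (u - x))); apply: bl_join_lub => //.
apply/(bl_subr_ge0 (u - x)).
by rewrite opprB addrA [y + x]addrC.
Qed.

End BanachLatticeFacts.

Arguments bl_subr_ge0 {R E L} x y.
Arguments labs_le {R E L} z x.

Section DualFunctionals.
Variables (R : realType) (E : normedModType R).
Implicit Types (f g : E -> R) (phi psi : (E -> R) -> R).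

Lemma dual_linear f : in_dual f -> forall a x y, f (a *: x + y) = a * f x + f y.
Proof. by case. Qed.

Lemma dual_linearD f x y : in_dual f -> f (x + y) = f x + f y.
Proof. by move=> /dual_linear H; have := H 1 x y; rewrite scale1r mul1r. Qed.

Lemma dual_linear0 f : in_dual f -> f 0 = 0.
Proof. by move=> H; apply: (@addrI _ (f 0)); rewrite -dual_linearD // !addr0. Qed.

Lemma dual_linearZ f a x : in_dual f -> f (a *: x) = a * f x.
Proof. by move=> H; have := dual_linear H a x 0; rewrite !addr0 dual_linear0 ?addr0. Qed.

Lemma dual_linearB f x y : in_dual f -> f (x - y) = f x - f y.
Proof. by move=> H; rewrite dual_linearD // -scaleN1r dual_linearZ // mulN1r. Qed.

Lemma dual_bounded f : in_dual f ->
  exists C, 0 <= C /\ forall x, `|f x| <= C * `|x|.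
Proof.
case=> _ [C HC]; exists (Num.max C 0); split=> [|x]; first by rewrite le_max lexx orbT.
by apply: le_trans (HC x) _; apply: ler_wpM2r => //; rewrite le_max lexx.
Qed.

Lemma in_dual0 : in_dual (fun _ : E => 0 : R).
Proof.
split; first by move=> a x y; rewrite /GRing.scale /= mulr0 addr0.
by exists 0 => x; rewrite normr0 mul0r.
Qed.

Lemma in_dual_comb f g a : in_dual f -> in_dual g ->
  in_dual (fun x => a * f x + g x).
Proof.
move=> Hf Hg; split.
  by move=> c x y; rewrite (dual_linear Hf) (dual_linear Hg) /GRing.scale /=; ring.
have [Cf [Cf0 HCf]] := dual_bounded Hf; have [Cg [Cg0 HCg]] := dual_bounded Hg.
exists (`|a| * Cf + Cg) => x; apply: le_trans (ler_normD _ _) _.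
by rewrite normrM mulrDl -mulrA; apply: lerD => //; apply: ler_wpM2l.
Qed.

Lemma in_dualZ f a : in_dual f -> in_dual (fun x => a * f x).
Proof.
move=> Hf; have := in_dual_comb a Hf in_dual0.
by congr in_dual; apply: funext => x; rewrite addr0.
Qed.

Lemma in_dualD f g : in_dual f -> in_dual g -> in_dual (fun x => f x + g x).
Proof.
move=> Hf Hg; have := in_dual_comb 1 Hf Hg.
by congr in_dual; apply: funext => x; rewrite mul1r.
Qed.

Lemma in_dualB f g : in_dual f -> in_dual g -> in_dual (fun x => f x - g x).
Proof.
move=> Hf Hg; have := in_dual_comb (-1) Hg Hf.
by congr in_dual; apply: funext => x; rewrite mulN1r addrC.
Qed.

Lemma dual_norm_ge0 f : in_dual f -> 0 <= dual_norm f.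
Proof.
move=> Hf; have [C [C0 HC]] := dual_bounded Hf.
apply: (@le_trans _ _ `|f 0|); first by rewrite dual_linear0.
apply: ub_le_sup; last by exists 0 => //=; rewrite normr0.
exists C => _ [z /= z1 <-]; apply: le_trans (HC z) _.
by rewrite -[leRHS]mulr1; apply: ler_wpM2l.
Qed.

Lemma dual_norm_ub f x : in_dual f -> `|f x| <= dual_norm f * `|x|.
Proof.
move=> Hf; have [C [C0 HC]] := dual_bounded Hf.
have [->|x0] := eqVneq x 0; first by rewrite dual_linear0 // !normr0 mulr0.
have nx : 0 < `|x| by rewrite normr_gt0.
have : `|f (`|x|^-1 *: x)| <= dual_norm f.
  apply: ub_le_sup; last first.
    by exists (`|x|^-1 *: x) => //=; rewrite normrZ normfV normr_id mulVf ?gt_eqF.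
  exists C => _ [z /= z1 <-]; apply: le_trans (HC z) _.
  by rewrite -[leRHS]mulr1; apply: ler_wpM2l.
by rewrite dual_linearZ // normrM normfV normr_id mulrC ler_pdivrMr.
Qed.

Lemma dual_norm_le f K : 0 <= K -> (forall x, `|f x| <= K * `|x|) ->
  dual_norm f <= K.
Proof.
move=> K0 HK; apply: ge_sup; first by exists `|f 0|, 0 => //=; rewrite normr0.
move=> _ [z /= z1 <-]; apply: le_trans (HK z) _.
by rewrite -[leRHS]mulr1; apply: ler_wpM2l.
Qed.

Lemma bidual_bounded phi : in_bidual phi ->
  exists C, 0 <= C /\ forall f, in_dual f -> `|phi f| <= C * dual_norm f.
Proof.
case=> _ [C HC]; exists (Num.max C 0); split=> [|f Hf]; first by rewrite le_max lexx orbT.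
apply: le_trans (HC f Hf) _; apply: ler_wpM2r; first exact: dual_norm_ge0.
by rewrite le_max lexx.
Qed.

Lemma bidual_linearB phi f g : in_bidual phi -> in_dual f -> in_dual g ->
  phi (fun x => f x - g x) = phi f - phi g.
Proof.
move=> [phi_lin _] Hf Hg; have := phi_lin (-1) g f Hg Hf.
have -> : (fun x => -1 * g x + f x) = (fun x => f x - g x).
  by apply: funext => x; rewrite mulN1r addrC.
by move->; rewrite mulN1r addrC.
Qed.

Lemma in_bidualB phi psi : in_bidual phi -> in_bidual psi ->
  in_bidual (fun f => phi f - psi f).
Proof.
move=> Hphi Hpsi; have [Cphi [_ HCphi]] := bidual_bounded Hphi.
have [Cpsi [_ HCpsi]] := bidual_bounded Hpsi.
split=> [a f g Hf Hg|]; first by rewrite Hphi.1 // Hpsi.1 //; ring.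
exists (Cphi + Cpsi) => f Hf; apply: le_trans (ler_normB _ _) _.
by rewrite mulrDl; apply: lerD; [apply: HCphi|apply: HCpsi].
Qed.

Lemma weakly_nullB (a b : nat -> E -> R) :
  (forall n, in_dual (a n)) -> (forall n, in_dual (b n)) ->
  weakly_null a -> weakly_null b -> weakly_null (fun n x => a n x - b n x).
Proof.
move=> Ha Hb a0 b0 phi Hphi; rewrite -(subrr (0 : R)).
under eq_fun do rewrite bidual_linearB //.
exact: cvgB (a0 _ Hphi) (b0 _ Hphi).
Qed.

End DualFunctionals.

Lemma in_dual_comp (R : realType) (E F : normedModType R) (g : F -> R)
    (S : E -> F) :
  in_dual g -> bounded_linear S -> in_dual (fun x => g (S x)).
Proof.
move=> Hg [S_lin [CS HCS]]; split; first by move=> a x y; rewrite S_lin dual_linear.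
have [C [C0 HC]] := dual_bounded Hg; exists (C * CS) => x.
by apply: le_trans (HC _) _; rewrite -mulrA; apply: ler_wpM2l.
Qed.

Section DualLattice.
Variables (R : realType) (E : completeNormedModType R) (L : banach_lattice_on E).
Local Notation PE := (bl_le L 0).
Implicit Types (f g h k : E -> R).

Lemma dual_riesz_data f : in_dual f ->
  riesz_data (fun _ : E => True) PE (lpos L) (lneg L) f.
Proof.
move=> Hf; have [C [C0 HC]] := dual_bounded Hf; split => //.
- exact: bl_refl.
- exact: bl_addr_ge0.
- exact: bl_scaler_ge0.
- by move=> v _; apply: lpos_ge0.
- by move=> v _; apply: lneg_ge0.
- by move=> v _; rewrite lpos_sub_lneg.
- exact: bl_riesz_decomposition.
- by move=> a x y _ _; apply: dual_linear.
move=> x Px; exists (C * `|x|) => z Pz Pxz.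
apply: le_trans (ler_norm _) _; apply: le_trans (HC z) _; apply: ler_wpM2l => //.
by apply: (bl_norm_mono Pz); apply/(bl_subr_ge0 z x).
Qed.

(* [f^+] and [f^-] in the dual lattice, with [f^+(x) = sup f([0, x])] for [x >= 0]. *)
Definition dpos f : E -> R := rk_pos PE (lpos L) (lneg L) f.
Definition dneg f : E -> R := fun x => dpos f x - f x.

Lemma dpos_sub_dneg f x : dpos f x - dneg f x = f x.
Proof. by rewrite /dneg opprB subrKC. Qed.

Lemma dpos_cone f x : in_dual f -> PE x -> dpos f x = rk_sup PE f x.
Proof. by move=> Hf; apply: (rk_pos_cone (dual_riesz_data Hf)). Qed.

Lemma dpos_norm_le f C : in_dual f -> 0 <= C -> (forall x, `|f x| <= C * `|x|) ->
  forall v, `|dpos f v| <= C * `|v|.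
Proof.
move=> Hf C0 HC v; rewrite -[`|v|]mul1r.
apply: (rk_pos_norm_le (dual_riesz_data Hf)) => // [x z _ Pz Pxz|z _|w _].
- by apply: (bl_norm_mono Pz); apply/(bl_subr_ge0 z x).
- exact: le_trans (ler_norm _) (HC z).
- by rewrite !mul1r norm_lpos norm_lneg.
Qed.

Lemma in_dual_dpos f : in_dual f -> in_dual (dpos f).
Proof.
move=> Hf; split=> [a x y|]; first exact: (rk_pos_linear (dual_riesz_data Hf)).
have [C [C0 HC]] := dual_bounded Hf; exists C; exact: dpos_norm_le.
Qed.

Lemma in_dual_dneg f : in_dual f -> in_dual (dneg f).
Proof. by move=> Hf; apply: in_dualB => //; apply: in_dual_dpos. Qed.

Lemma dual_norm_dpos f : in_dual f -> dual_norm (dpos f) <= dual_norm f.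
Proof.
move=> Hf; have nf0 := dual_norm_ge0 Hf.
by apply: dual_norm_le => //; apply: dpos_norm_le => // x; apply: dual_norm_ub.
Qed.

Lemma dual_norm_dneg f : in_dual f -> dual_norm (dneg f) <= 2 * dual_norm f.
Proof.
move=> Hf; apply: dual_norm_le => [|x]; first by rewrite mulr_ge0 ?dual_norm_ge0.
apply: le_trans (ler_normB _ _) _.
have := dual_norm_ub x (in_dual_dpos Hf); have := dual_norm_ub x Hf.
have := ler_wpM2r (normr_ge0 x) (dual_norm_dpos Hf); lra.
Qed.

Lemma dpos_ge f x : in_dual f -> PE x -> 0 <= dpos f x /\ f x <= dpos f x.
Proof.
move=> Hf Px; rewrite dpos_cone //.
have rd := dual_riesz_data Hf.
by split; [apply: (rk_sup_ge0 rd)|apply: (le_rk_sup rd)].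
Qed.

Lemma dneg_ge0 f x : in_dual f -> PE x -> 0 <= dneg f x.
Proof. by move=> Hf Px; rewrite subr_ge0; case: (dpos_ge Hf Px). Qed.

Lemma dpos_le f k x : in_dual f -> in_dual k ->
  (forall z, PE z -> 0 <= k z /\ f z <= k z) -> PE x -> dpos f x <= k x.
Proof.
move=> Hf Hk fk Px; rewrite dpos_cone //.
apply: (rk_sup_le (dual_riesz_data Hf)) => // z Pz Pxz.
apply: le_trans (fk z Pz).2 _; rewrite -subr_ge0 -dual_linearB //.
exact: (fk _ Pxz).1.
Qed.

Lemma labs_le_shift z x : bl_le L (labs L z) x <-> PE (z + x) /\ PE (x + x - (z + x)).
Proof.
have := @bl_subr_ge0 _ _ L z x; have := @bl_subr_ge0 _ _ L (- z) x.
by rewrite labs_le opprK [z + x]addrC addrKA; tauto.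
Qed.

(* Translation by [x] maps [{z | |z| <= x}] onto the order interval [[0, 2x]]. *)
Lemma dabs_pos_cone f x : in_dual f -> PE x ->
  dabs_pos L f x = 2 * rk_sup PE f x - f x.
Proof.
move=> Hf Px; have rd := dual_riesz_data Hf.
rewrite -[2]/(1 + 1) mulrDl !mul1r -(rk_supD rd) //.
have [C [C0 HC]] := dual_bounded Hf.
have ub : has_ubound [set f z | z in [set z | bl_le L (labs L z) x]].
  exists (C * `|x|) => _ [z Hz <-]; apply: le_trans (ler_norm _) _.
  by apply: le_trans (HC z) _; apply: ler_wpM2l => //; exact: norm_labs_le Hz.
apply/eqP; rewrite eq_le; apply/andP; split.
  apply: ge_sup => [|_ [z /labs_le_shift [Pzx Pxzx] <-]].
    by exists (f 0), 0 => //; rewrite /= /labs oppr0; apply: bl_join_lub.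
  rewrite lerBrDr -dual_linearD //; apply: (rk_sup_ub rd) => //.
  exact: bl_addr_ge0.
rewrite lerBlDr; apply: (rk_sup_le rd) => [|w Pw Pxxw]; first exact: bl_addr_ge0.
rewrite -lerBlDr -dual_linearB //; apply: ub_le_sup => //; exists (w - x) => //.
by apply/labs_le_shift; rewrite subrK.
Qed.

Lemma dabsE f v : in_dual f -> dabs L f v = dpos f v + dneg f v.
Proof.
move=> Hf; rewrite /dabs (dabs_pos_cone Hf (lpos_ge0 L v)).
rewrite (dabs_pos_cone Hf (lneg_ge0 L v)) /dneg /dpos /rk_pos.
have -> : f v = f (lpos L v) - f (lneg L v) by rewrite -dual_linearB // lpos_sub_lneg.
ring.
Qed.

Definition positive_dual g := in_dual g /\ forall x, PE x -> 0 <= g x.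

Lemma dpos_positive f : positive_dual f -> dpos f = f.
Proof.
move=> [Hf f0]; apply: funext => v.
have rd := dual_riesz_data Hf.
have fsup x : PE x -> rk_sup PE f x = f x.
  move=> Px; apply/eqP; rewrite eq_le (le_rk_sup rd) // andbT.
  apply: (rk_sup_le rd) => // z Pz Pxz.
  by rewrite -subr_ge0 -dual_linearB //; apply: f0.
rewrite /dpos /rk_pos (fsup _ (lpos_ge0 L v)) (fsup _ (lneg_ge0 L v)).
by rewrite -dual_linearB // lpos_sub_lneg.
Qed.

Lemma positive_dual_dabs f : in_dual f -> positive_dual (dabs L f).
Proof.
move=> Hf; have -> : dabs L f = fun v => dpos f v + dneg f v.
  by apply: funext => v; apply: dabsE.
split; first by apply: in_dualD; [apply: in_dual_dpos|apply: in_dual_dneg].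
by move=> x Px; apply: addr_ge0; [case: (dpos_ge Hf Px)|apply: dneg_ge0].
Qed.

Lemma dabs_idem f : in_dual f -> dabs L (dabs L f) = dabs L f.
Proof.
move=> Hf; have Habs := positive_dual_dabs Hf.
apply: funext => v; rewrite dabsE; last exact: Habs.1.
by rewrite /dneg dpos_positive // subrr addr0.
Qed.

Lemma dpos_dneg_le_dabs f x : in_dual f -> PE x ->
  [/\ 0 <= dpos f x <= dabs L f x & 0 <= dneg f x <= dabs L f x].
Proof.
move=> Hf Px; have [dpos0 _] := dpos_ge Hf Px; have dneg0 := dneg_ge0 Hf Px.
by rewrite dabsE // dpos0 dneg0 lerDl lerDr dpos0 dneg0.
Qed.

Lemma positive_dual_norm h x : positive_dual h -> `|h x| <= h (labs L x).
Proof.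
move=> [Hh h0]; have ubl := bl_join_ubl L x (- x); have ubr := bl_join_ubr L x (- x).
have := h0 _ ((bl_subr_ge0 _ _).1 ubl); have := h0 _ ((bl_subr_ge0 _ _).1 ubr).
rewrite opprK dual_linearD // dual_linearB // ler_norml => *.
by apply/andP; split; lra.
Qed.

Lemma dual_norm_mono h k : positive_dual h -> in_dual k ->
  (forall x, PE x -> h x <= k x) -> dual_norm h <= dual_norm k.
Proof.
move=> Hh Hk hk; apply: dual_norm_le => [|z]; first exact: dual_norm_ge0.
apply: le_trans (positive_dual_norm z Hh) _; apply: le_trans (hk _ (labs_ge0 L z)) _.
apply: le_trans (ler_norm _) _; apply: le_trans (dual_norm_ub _ Hk) _.
by apply: ler_wpM2l; [exact: dual_norm_ge0|exact: norm_labs].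
Qed.

End DualLattice.

Section Bidual.
Variables (R : realType) (E : completeNormedModType R) (L : banach_lattice_on E).
Local Notation PE := (bl_le L 0).
Implicit Types (phi psi : (E -> R) -> R).

(* The witness is [u - (u - x)^+], the infimum of [u] and [x]. *)
Lemma positive_dual_decomposition (u x y : E -> R^o) :
  positive_dual L u -> positive_dual L x -> positive_dual L y ->
  positive_dual L (x + y - u) ->
  exists u1, [/\ positive_dual L u1, positive_dual L (x - u1),
    positive_dual L (u - u1) & positive_dual L (y - (u - u1))].
Proof.
move=> [Hu u0] [Hx x0] [Hy y0] [_ xyu0].
have [d [Hd d_ge d_le_u d_le_y]] : exists d : E -> R, [/\ in_dual d,
    forall z, PE z -> 0 <= d z /\ u z - x z <= d z,
    forall z, PE z -> d z <= u z & forall z, PE z -> d z <= y z].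
  have Hux : in_dual (u - x) by exact: in_dualB.
  exists (dpos L (u - x)); split=> [|z|z|z]; first exact: in_dual_dpos.
  - exact: dpos_ge.
  - apply: dpos_le => // w Pw; split; first exact: u0.
    by rewrite !fctE lerBlDr lerDl; apply: x0.
  - apply: dpos_le => // w Pw; split; first exact: y0.
    by have := xyu0 w Pw; rewrite !fctE; lra.
exists (u - d); split; split=> [|z Pz]; first [by rewrite !fctE; do ?apply: in_dualB
  | by have := d_ge z Pz; have := d_le_u z Pz; have := d_le_y z Pz; rewrite !fctE; lra].
Qed.

Lemma bidual_riesz_data phi : in_bidual phi ->
  @riesz_data R (E -> R^o) (@in_dual R E) (positive_dual L) (dpos L) (dneg L) phi.
Proof.
move=> Hphi; split.
- exact: in_dual0.
- by move=> a x y; apply: in_dual_comb.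
- by move=> x [].
- by split=> [|x _]; [exact: in_dual0|exact: lexx].
- by move=> x y [Hx x0] [Hy y0]; split=> [|z Pz]; [apply: in_dualD|apply: addr_ge0; auto].
- by move=> a x a0 [Hx x0]; split=> [|z Pz]; [apply: in_dualZ|apply: mulr_ge0; auto].
- by move=> v Hv; split=> [|z Pz]; [apply: in_dual_dpos|case: (dpos_ge Hv Pz)].
- by move=> v Hv; split=> [|z Pz]; [apply: in_dual_dneg|apply: dneg_ge0].
- by move=> v _; apply: funext => z; rewrite fctE dpos_sub_dneg.
- exact: positive_dual_decomposition.
- by move=> a f g Hf Hg; apply: Hphi.1.
move=> k [Hk k0]; have [C [C0 HC]] := bidual_bounded Hphi.
exists (C * dual_norm k) => h Hh [_ kh0].
apply: le_trans (ler_norm _) _; apply: le_trans (HC h Hh.1) _.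
apply: ler_wpM2l => //; apply: (dual_norm_mono Hh Hk) => z Pz.
by rewrite -subr_ge0; apply: kh0.
Qed.

Definition bidual_pos phi : (E -> R) -> R :=
  rk_pos (positive_dual L) (dpos L) (dneg L) phi.

Lemma in_bidual_pos phi : in_bidual phi -> in_bidual (bidual_pos phi).
Proof.
move=> Hphi; have rd := bidual_riesz_data Hphi.
split=> [a f g Hf Hg|]; first exact: (rk_pos_linear rd).
have [C [C0 HC]] := bidual_bounded Hphi; exists (C * 2) => g Hg; rewrite -mulrA.
apply: (rk_pos_norm_le rd) => // [k h Pk Ph Pkh|h Ph|f Hf].
- by apply: (dual_norm_mono Ph Pk.1) => z Pz; rewrite -subr_ge0; apply: Pkh.2.
- exact: le_trans (ler_norm _) (HC h Ph.1).
have nf0 := dual_norm_ge0 Hf; split; last exact: dual_norm_dneg.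
by apply: le_trans (dual_norm_dpos _ Hf) _; lra.
Qed.

Lemma bidual_pos_ge phi k : in_bidual phi -> positive_dual L k ->
  0 <= bidual_pos phi k /\ phi k <= bidual_pos phi k.
Proof.
move=> Hphi Hk; have rd := bidual_riesz_data Hphi.
rewrite /bidual_pos (rk_pos_cone rd) //.
by split; [apply: (rk_sup_ge0 rd)|apply: (le_rk_sup rd)].
Qed.

Lemma positive_bidual_dominated psi (t w : nat -> E -> R) : in_bidual psi ->
  (forall k, positive_dual L k -> 0 <= psi k) ->
  (forall n, in_dual (t n)) -> (forall n, in_dual (w n)) ->
  (forall n x, PE x -> 0 <= w n x <= t n x) ->
  (fun n => psi (t n)) @ \oo --> (0 : R) -> (fun n => psi (w n)) @ \oo --> (0 : R).
Proof.
move=> Hpsi psi0 Ht Hw wt; apply: (squeeze_cvgr _ (cvg_cst 0)); apply: nearW => n.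
apply/andP; split.
  by apply: psi0; split=> // x Px; case/andP: (wt n x Px).
rewrite -subr_ge0 -bidual_linearB //; apply: psi0; split; first exact: in_dualB.
by move=> x Px; case/andP: (wt n x Px) => _; rewrite subr_ge0.
Qed.

(* [phi = phi^+ - (phi^+ - phi)], both terms being positive on [E']. *)
Lemma weakly_null_dominated (t w : nat -> E -> R) :
  (forall n, in_dual (t n)) -> (forall n, in_dual (w n)) ->
  (forall n x, PE x -> 0 <= w n x <= t n x) ->
  weakly_null t -> weakly_null w.
Proof.
move=> Ht Hw wt t0 phi Hphi; have Hpos := in_bidual_pos Hphi.
have Hneg := in_bidualB Hpos Hphi.
have pos0 := positive_bidual_dominated Hpos _ Ht Hw wt (t0 _ Hpos).
have neg0 := positive_bidual_dominated Hneg _ Ht Hw wt (t0 _ Hneg).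
have -> : (fun n => phi (w n)) =
    (fun n => bidual_pos phi (w n) - (bidual_pos phi (w n) - phi (w n))).
  by apply: funext => n; rewrite subKr.
rewrite -(subrr (0 : R)).
apply: cvgB; [apply: pos0|apply: neg0] => k /(bidual_pos_ge Hphi) [] //= _.
by rewrite subr_ge0.
Qed.

End Bidual.

Section PositiveOperators.
Variables (R : realType) (E F : completeNormedModType R).
Variables (LE : banach_lattice_on E) (LF : banach_lattice_on F).

Lemma dual_disjoint_seq_dabs (y : nat -> F -> R) : dual_disjoint_seq LF y ->
  dual_disjoint_seq LF (fun n => dabs LF (y n)).
Proof.
move=> [Hy y_disj]; split=> [n|n m nm]; first exact: (positive_dual_dabs LF (Hy n)).1.
by rewrite /dual_disjoint !(dabs_idem LF (Hy _)); apply: y_disj.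
Qed.

Lemma weakly_null_comp_dominated (S T : E -> F) (g h : nat -> F -> R) :
  bounded_linear S -> bounded_linear T ->
  positive_op LE LF S -> positive_op LE LF (fun x => T x - S x) ->
  (forall n, positive_dual LF (g n)) -> (forall n, in_dual (h n)) ->
  (forall n z, bl_le LF 0 z -> 0 <= h n z <= g n z) ->
  weakly_null (fun n x => g n (T x)) -> weakly_null (fun n x => h n (S x)).
Proof.
move=> HS HT Spos TSpos Hg Hh hg; apply: (weakly_null_dominated (L := LE)) => n.
- exact: in_dual_comp (Hg n).1 HT.
- exact: in_dual_comp (Hh n) HS.
move=> x Px; have [Hgn g0] := Hg n; have /andP[-> hgS] := hg n _ (Spos x Px).
by apply: le_trans hgS _; rewrite -subr_ge0 -dual_linearB //; apply/g0/TSpos.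
Qed.

End PositiveOperators.

Theorem mainTheorem13 (R : realType) (E F : completeNormedModType R)
  (LE : banach_lattice_on E) (LF : banach_lattice_on F) (S T : E -> F) :
  property_d LF ->
  bounded_linear S -> bounded_linear T ->
  positive_op LE LF S ->
  positive_op LE LF (fun x => T x - S x) ->
  almost_grothendieck LF T ->
  almost_grothendieck LF S.
Proof.
move=> Hd HS HT Spos TSpos HTg y Hy y0; have Hyn := Hy.1.
have absT0 := HTg _ (dual_disjoint_seq_dabs Hy) (Hd y Hy y0).
have dominated := weakly_null_comp_dominated HS HT Spos TSpos
  (fun n => positive_dual_dabs LF (Hyn n)) _ _ absT0.
have Hpos n := in_dual_dpos LF (Hyn n); have Hneg n := in_dual_dneg LF (Hyn n).
have -> : (fun n x => y n (S x)) =
    (fun n x => dpos LF (y n) (S x) - dneg LF (y n) (S x)).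
  by apply: funext => n; apply: funext => x; rewrite dpos_sub_dneg.
apply: weakly_nullB => [n|n||].
- exact: in_dual_comp (Hpos n) HS.
- exact: in_dual_comp (Hneg n) HS.
- by apply: (dominated (fun n => dpos LF (y n))) => // n z /(dpos_dneg_le_dabs (Hyn n)) [].
- by apply: (dominated (fun n => dneg LF (y n))) => // n z /(dpos_dneg_le_dabs (Hyn n)) [].
Qed.
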